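(* Assume that for some $\gamma>0$ the sequence $\left(j\lambda_j\log^{1+\gamma}(j\vee2)\right)_{j\ge1}$ is decreasing. Then there exists a constant $C(\gamma)$ depending only on $\gamma$ such that for every integer $k\ge1$, $$\sum_{j\ge1,\,j\ne k}\frac{\lambda_j}{|\lambda_k-\lambda_j|}\le C(\gamma)\,k\left[\log k\vee1\right].$$
   Context: $(\lambda_j)_{j\ge1}$ is the non-increasing sequence of (nonnegative) eigenvalues of the covariance operator $\Gamma h=\mathbb E[\langle h,X\rangle X]$ of a centered square-integrable random element $X$ of a separable Hilbert space. *)

From HB Require Import structures.
From mathcomp Require Import all_boot all_order all_algebra.
From mathcomp Require Import all_classical all_reals all_analysis.
Set Implicit Arguments. Unset Strict Implicit. Unset Printing Implicit Defensive.
Import Order.TTheory GRing.Theory Num.Theory.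
Local Open Scope ring_scope.

(* The eigenvalue sequence lambda_1 >= lambda_2 >= ... >= 0 (index 0 unused). *)
Definition eigen_seq (R : realType) (lam : nat -> R) : Prop :=
  (forall j, (1 <= j)%N -> 0 <= lam j) /\
  (forall j, (1 <= j)%N -> lam j.+1 <= lam j).

Definition weighted (R : realType) (gamma : R) (lam : nat -> R) (j : nat) : R :=
  j%:R * lam j * (ln (maxn j 2)%:R) `^ (1 + gamma).

(* "decreasing" read as non-increasing for j >= 1 *)
Definition decreasing_from1 (R : realType) (u : nat -> R) : Prop :=
  forall j, (1 <= j)%N -> u j.+1 <= u j.

From HB Require Import structures.
From mathcomp Require Import all_boot all_order all_algebra.
From mathcomp Require Import all_classical all_reals all_analysis.
From mathcomp Require Import ring lra zify.
Import Order.TTheory GRing.Theory Num.Theory.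
Local Open Scope ring_scope.

(* Since log^(1+gamma) is nondecreasing, the hypothesis makes j lambda_j
   nonincreasing.  For j < k this bounds lambda_j / |lambda_k - lambda_j| by
   k / (k - j), and for k < j <= 2k+1 by j / (j - k); both ranges sum to
   O(k log k) through the harmonic bound H_n <= 1 + log n.  For j >= 2k one has
   lambda_j <= lambda_k / 2, so the term is at most 2 lambda_j / lambda_k
   <= 2 k L(k) / (j L(j)) with L = log^(1+gamma) (clipped at 2); by convexity
   of t |-> t^(-gamma), 1 / (j L(j)) <= (log^(-gamma)(j-1) - log^(-gamma) j) / gamma,
   which telescopes to a tail of size (2/gamma) k log (k v 2). *)

Section RealFacts.
Context {R : realType}.
Implicit Types (x y g : R) (n : nat).

Lemma ln_sub_ge x y : 0 < x -> 0 < y -> 1 - y / x <= ln x - ln y.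
Proof.
move=> x0 y0; have yx0 : 0 < y / x by rewrite divr_gt0.
have : ln (1 + (y / x - 1)) <= y / x - 1 by apply: le_ln1Dx; lra.
by rewrite addrC subrK lnM ?posrE ?invr_gt0 // lnV ?posrE //; lra.
Qed.

Lemma invn_le_ln_sub n : (0 < n)%N ->
  ((n.+1)%:R : R)^-1 <= ln (n.+1)%:R - ln n%:R.
Proof.
move=> n0; have -> : ((n.+1)%:R : R)^-1 = 1 - n%:R / (n.+1)%:R.
  by rewrite -[X in X - _](@divff _ (n.+1)%:R) // -mulrBl -natrB // subSnn mul1r.
by apply: ln_sub_ge; rewrite ltr0n.
Qed.

Lemma harmonic_le_1Dln n : (1 <= n)%N ->
  \sum_(1 <= i < n.+1) (i%:R : R)^-1 <= 1 + ln n%:R.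
Proof.
elim: n => // -[_ _|n IH _]; first by rewrite big_nat1 invr1 ln1 addr0.
rewrite big_nat_recr //=.
apply: le_trans (lerD (IH isT) (invn_le_ln_sub _ _)) _ => //.
by rewrite addrCA addrK addrC.
Qed.

Lemma ln2_le1 : ln (2%:R : R) <= 1.
Proof. by rewrite mulr2n; apply: le_ln1Dx; lra. Qed.

Lemma ln_succ_le_1Dln n : (1 <= n)%N -> ln ((n.+1)%:R : R) <= 1 + ln n%:R.
Proof.
move=> n1; apply: le_trans (_ : ln (2 * n%:R) <= _).
  by rewrite ler_ln ?posrE ?mulr_gt0 ?ltr0n // -natrM ler_nat; lia.
by rewrite lnM ?posrE ?ltr0n // lerD2r ln2_le1.
Qed.

Lemma ln_maxn2_gt0 n : 0 < ln ((maxn n 2)%:R : R).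
Proof. by apply: ln_gt0; rewrite ltr1n (leq_trans _ (leq_maxr _ _)). Qed.

Lemma ln_maxn2_le_max n : ln ((maxn n 2)%:R : R) <= Num.max (ln n%:R) 1.
Proof.
by rewrite le_max; case: (leqP 2 n) => _; rewrite ?lexx ?ln2_le1 ?orbT.
Qed.

Lemma sum_inv_diff_below n : (1 <= n)%N ->
  \sum_(1 <= j < n) ((n - j)%:R : R)^-1 <= 1 + ln n%:R.
Proof.
move=> n1; rewrite big_nat_rev /= add1n.
rewrite (@eq_big_nat _ _ _ 1 n _ (fun i => (i%:R : R)^-1)); last first.
  by move=> i /andP[i1 iN]; congr (_%:R^-1); lia.
apply: le_trans _ (harmonic_le_1Dln _ n1).
by rewrite big_nat_recr //= lerDl invr_ge0.
Qed.

Lemma sum_inv_diff_above n :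
  \sum_(n.+1 <= j < n.*2.+2) ((j - n)%:R : R)^-1 <= 1 + ln (n.+1)%:R.
Proof.
rewrite -add1n big_addn (_ : n.*2.+2 - n = n.+2)%N; last by lia.
rewrite (@eq_big_nat _ _ _ 1 n.+2 _ (fun i => (i%:R : R)^-1)) => [|i _].
  exact: harmonic_le_1Dln.
by rewrite addnK.
Qed.

(* Convexity of [t |-> t `^ (- g)], in the tangent-line form at [x]. *)
Lemma powRN_sub_ge x y g : 0 < x -> 0 < y -> 0 <= g ->
  x `^ (- g) * (g * (1 - y / x)) <= y `^ (- g) - x `^ (- g).
Proof.
move=> x0 y0 g0.
suff : x `^ (- g) * (1 + g * (1 - y / x)) <= y `^ (- g) by rewrite mulrDr mulr1; lra.
have -> : y `^ (- g) = x `^ (- g) * expR (g * (ln x - ln y)).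
  by rewrite /powR !gt_eqF // -expRD; congr expR; ring.
apply: ler_wpM2l; first exact: powR_ge0.
apply: le_trans (expR_ge1Dx _); rewrite lerD2l.
by apply: ler_wpM2l => //; exact: ln_sub_ge.
Qed.

End RealFacts.

Definition log_weight {R : realType} (g : R) (j : nat) : R :=
  ln (maxn j 2)%:R `^ (1 + g).

Definition log_tail {R : realType} (g : R) (i : nat) : R := ln i%:R `^ (- g).

Section LogWeight.
Context {R : realType} (g : R).

Lemma log_weight_gt0 j : 0 < log_weight g j.
Proof. exact/powR_gt0/ln_maxn2_gt0. Qed.

Lemma le_log_weight i j : 0 <= 1 + g -> (i <= j)%N -> log_weight g i <= log_weight g j.
Proof.
move=> g1 ij; apply: ge0_ler_powR => //; rewrite ?nnegrE; try exact: ltW (ln_maxn2_gt0 _).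
rewrite ler_ln ?posrE ?ltr0n ?(leq_trans _ (leq_maxr _ _)) // ler_nat.
by rewrite geq_max !leq_max ij leqnn !orbT.
Qed.

Lemma inv_weight_le_log_tail j : 0 < g -> (3 <= j)%N ->
  (j%:R * log_weight g j)^-1 <= (log_tail g j.-1 - log_tail g j) / g.
Proof.
case: j => // j g0 j3; rewrite /log_weight /log_tail /= (maxn_idPl (ltnW j3)).
have j0 : (0 < j)%N by lia.
set x := ln (j.+1)%:R; set y := ln j%:R.
have x0 : 0 < x by apply: ln_gt0; rewrite ltr1n ltnS.
have y0 : 0 < y by apply: ln_gt0; rewrite ltr1n.
have jx : (j.+1%:R * x)^-1 <= 1 - y / x.
  rewrite invfM -[1 in leRHS](divff (lt0r_neq0 x0)) -mulrBl.
  by rewrite ler_pM2r ?invr_gt0 //; exact: invn_le_ln_sub.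
rewrite ler_pdivlMr // powRD ?(lt0r_neq0 x0) ?implybT // (powRr1 (ltW x0)).
apply: le_trans _ (powRN_sub_ge _ _ _ x0 y0 (ltW g0)).
have -> : (j.+1%:R * (x * x `^ g))^-1 * g = x `^ (- g) * (g * (j.+1%:R * x)^-1).
  by rewrite powRN !invfM; ring.
by apply: ler_wpM2l; [exact: powR_ge0 | apply: ler_wpM2l; [exact: ltW | exact: jx]].
Qed.

Lemma log_weight_mul_tail_le k m : 0 <= g -> (maxn k 2 <= m)%N ->
  log_weight g k * log_tail g m <= ln (maxn k 2)%:R.
Proof.
move=> g0 km; rewrite /log_weight /log_tail.
set a := ln (maxn k 2)%:R; set b := ln m%:R.
have a0 : 0 < a by exact: ln_maxn2_gt0.
have ab : a <= b.
  by rewrite ler_ln ?posrE ?ltr0n ?ler_nat //; lia.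
have b0 : 0 < b := lt_le_trans a0 ab.
rewrite powRD ?(lt0r_neq0 a0) ?implybT // (powRr1 (ltW a0)) powRN -mulrA ger_pMr //.
rewrite ler_pdivrMr ?powR_gt0 // mul1r.
by apply: ge0_ler_powR; rewrite ?nnegrE ?(ltW a0) ?(ltW b0).
Qed.

End LogWeight.

Lemma div_normB_le (R : realFieldType) (a b s t : R) :
  0 <= a -> 0 <= b -> 0 < s < t -> t * b <= s * a \/ t * a <= s * b ->
  a / `|b - a| <= t / (t - s).
Proof.
move=> a0 b0 /andP[s0 st] hab; have ts : 0 < t - s by rewrite subr_gt0.
have [->|nz] := eqVneq `|b - a| 0.
  by rewrite invr0 mulr0; apply: divr_ge0; apply: ltW => //; apply: lt_trans st.
have d0 : 0 < `|b - a| by rewrite lt0r nz normr_ge0.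
rewrite ler_pdivrMr // mulrAC ler_pdivlMr //.
case: hab => h.
- have ba : b <= a by nra.
  by rewrite distrC ger0_norm ?subr_ge0 //; nra.
- have ab : a <= b by nra.
  by rewrite ger0_norm ?subr_ge0 //; nra.
Qed.

Lemma div_normB_le_half (R : realFieldType) (a b p q : R) :
  0 <= a -> 2 * a <= b -> 0 < p -> 0 < q -> a * p <= b * q ->
  a / `|b - a| <= 2 * q / p.
Proof.
move=> a0 ab p0 q0 h.
have [->|nz] := eqVneq `|b - a| 0.
  by rewrite invr0 mulr0; apply: divr_ge0; apply: ltW; rewrite ?mulr_gt0.
have d0 : 0 < `|b - a| by rewrite lt0r nz normr_ge0.
rewrite ler_pdivrMr // mulrAC ler_pdivlMr // ger0_norm; nra.
Qed.

Lemma decreasing_from1_le {R : realType} {u : nat -> R} {i j : nat} :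
  decreasing_from1 u -> (1 <= i)%N -> (i <= j)%N -> u j <= u i.
Proof.
move=> h i1; elim: j => [|j IH]; first by rewrite leqn0 => /eqP ->.
rewrite leq_eqVlt => /orP[/eqP -> //|]; rewrite ltnS => ij.
exact: le_trans (h _ (leq_trans i1 ij)) (IH ij).
Qed.

Lemma big_nat_neq_split (V : nmodType) (m n k : nat) (F : nat -> V) :
  (m <= k < n)%N ->
  \sum_(m <= j < n | j != k) F j = \sum_(m <= j < k) F j + \sum_(k.+1 <= j < n) F j.
Proof.
move=> /andP[mk kn]; rewrite (@big_cat_nat _ _ _ k) ?(ltnW kn) //=.
rewrite [in X in _ + X]big_ltn_cond //= eqxx /=.
congr (_ + _); rewrite big_nat_cond [RHS]big_nat_cond; apply: eq_bigl => j.
  by case/boolP: (m <= j < k)%N => //= /andP[_ /ltn_eqF ->].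
by case/boolP: (k.+1 <= j < n)%N => //= /andP[/gtn_eqF ->].
Qed.

Section EigenvalueRatios.
Context {R : realType}.
Variables (g : R) (lam : nat -> R).
Hypotheses (g_gt0 : 0 < g) (lam_eigen : eigen_seq lam)
  (lam_weighted : decreasing_from1 (weighted g lam)).

Let lam_ge0 j : (1 <= j)%N -> 0 <= lam j.
Proof. by case: lam_eigen => + _; apply. Qed.

Lemma mul_lam_le {i j : nat} : (1 <= i)%N -> (i <= j)%N -> j%:R * lam j <= i%:R * lam i.
Proof.
move=> i1 ij; have w := decreasing_from1_le lam_weighted i1 ij.
rewrite -(ler_pM2r (log_weight_gt0 g j)); apply: le_trans w _.
apply: ler_wpM2l; first by rewrite mulr_ge0 ?lam_ge0.
by apply: le_log_weight => //; rewrite ltW // addr_gt0.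
Qed.

Lemma ratio_le_below {k j : nat} : (1 <= j)%N -> (j < k)%N ->
  lam j / `|lam k - lam j| <= k%:R / (k - j)%:R.
Proof.
move=> j1 jk; rewrite natrB; last exact: ltnW.
apply: div_normB_le.
- exact: lam_ge0.
- exact/lam_ge0/(leq_trans j1 (ltnW jk)).
- by rewrite ltr0n j1 ltr_nat.
- by left; exact: mul_lam_le (ltnW jk).
Qed.

Lemma ratio_le_above {k j : nat} : (1 <= k)%N -> (k < j)%N ->
  lam j / `|lam k - lam j| <= j%:R / (j - k)%:R.
Proof.
move=> k1 kj; rewrite natrB; last exact: ltnW.
apply: div_normB_le.
- exact/lam_ge0/(leq_trans k1 (ltnW kj)).
- exact: lam_ge0.
- by rewrite ltr0n k1 ltr_nat.
- by right; exact: mul_lam_le (ltnW kj).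
Qed.

Lemma ratio_le_far {k j : nat} : (1 <= k)%N -> (k.*2 <= j)%N ->
  lam j / `|lam k - lam j| <= 2 * (k%:R * log_weight g k) / (j%:R * log_weight g j).
Proof.
move=> k1 kj; have kj' : (k <= j)%N by apply: leq_trans kj; rewrite -addnn leq_addr.
have j1 := leq_trans k1 kj'.
apply: div_normB_le_half; rewrite ?mulr_gt0 ?ltr0n ?log_weight_gt0 //.
- exact: lam_ge0.
- have : k%:R * (2 * lam j) <= k%:R * lam k.
    apply: le_trans _ (mul_lam_le k1 kj'); rewrite mulrA.
    by apply: ler_wpM2r; rewrite ?lam_ge0 // mulrC -natrM ler_nat mul2n.
  by rewrite ler_pM2l ?ltr0n.
- have := decreasing_from1_le lam_weighted k1 kj'; rewrite /weighted.
  by rewrite [_ * lam j]mulrC [_ * lam k]mulrC -!mulrA.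
Qed.

Lemma sum_ratio_below k : (1 <= k)%N ->
  \sum_(1 <= j < k) lam j / `|lam k - lam j| <= k%:R * (1 + ln k%:R).
Proof.
move=> k1; apply: le_trans _ (ler_wpM2l (ler0n _ k) (sum_inv_diff_below _ k1)).
rewrite mulr_sumr; apply: ler_sum_nat => j /andP[j1 jk].
exact: ratio_le_below.
Qed.

Lemma sum_ratio_above k : (1 <= k)%N ->
  \sum_(k.+1 <= j < k.*2.+2) lam j / `|lam k - lam j|
    <= (k.*2.+1)%:R * (1 + ln (k.+1)%:R).
Proof.
move=> k1; apply: le_trans _ (ler_wpM2l (ler0n _ _) (sum_inv_diff_above k)).
rewrite mulr_sumr; apply: ler_sum_nat => j /andP[kj jk].
apply: le_trans (ratio_le_above k1 kj) _.
by rewrite ler_pM2r ?invr_gt0 ?ltr0n ?subn_gt0 // ler_nat -ltnS.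
Qed.

Lemma sum_ratio_far k n : (1 <= k)%N -> (k.*2.+2 <= n)%N ->
  \sum_(k.*2.+2 <= j < n) lam j / `|lam k - lam j|
    <= 2 * k%:R / g * ln (maxn k 2)%:R.
Proof.
move=> k1 kn; set c := 2 * (k%:R * log_weight g k).
have c0 : 0 < c by rewrite !mulr_gt0 ?ltr0n ?log_weight_gt0.
apply: le_trans (_ : \sum_(k.*2.+2 <= j < n)
    c * ((log_tail g j.-1 - log_tail g j) / g) <= _).
  apply: ler_sum_nat => j /andP[kj _].
  apply: le_trans (ratio_le_far k1 _) _; first lia.
  by rewrite ler_pM2l // inv_weight_le_log_tail //; lia.
rewrite (@telescope_sumr_eq _ _ _ (fun i => - (c / g) * log_tail g i.-1)) //;
  last by move=> i _ /=; ring.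
have tail0 : 0 <= log_tail g n.-1 by exact: powR_ge0.
have tail_le : c / g * log_tail g k.*2.+1 <= 2 * k%:R / g * ln (maxn k 2)%:R.
  have -> : c / g * log_tail g k.*2.+1
      = 2 * k%:R / g * (log_weight g k * log_tail g k.*2.+1).
    by rewrite /c; ring.
  rewrite ler_pM2l ?divr_gt0 ?mulr_gt0 ?ltr0n //.
  by apply: log_weight_mul_tail_le; rewrite ?ltW //; lia.
have ctail0 : 0 <= c / g * log_tail g n.-1 by rewrite mulr_ge0 // ltW ?divr_gt0.
rewrite /=; lra.
Qed.

Lemma sum_ratio_le k n : (1 <= k)%N -> (k.*2.+2 <= n)%N ->
  \sum_(1 <= j < n | j != k) lam j / `|lam k - lam j|
    <= (11 + 2 / g) * k%:R * Num.max (ln k%:R) 1.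
Proof.
move=> k1 kn; rewrite big_nat_neq_split; last by apply/andP; split; lia.
rewrite (@big_cat_nat _ _ _ k.*2.+2 k.+1 n) /=; [|lia|lia].
have below := sum_ratio_below k k1; have above := sum_ratio_above k k1.
have far := sum_ratio_far k n k1 kn.
have lnS0 : 0 <= ln ((k.+1)%:R : R) by apply: ln_ge0; rewrite ler1n.
have lnS := @ln_succ_le_1Dln R k k1.
have lnmax := @ln_maxn2_le_max R k.
set x := k%:R in below above far lnS lnmax *; set M := Num.max (ln x) 1 in lnmax *.
have x1 : 1 <= x by rewrite ler1n.
have M1 : 1 <= M by rewrite le_max lexx orbT.
have lnM : ln x <= M by rewrite le_max lexx.
have t1 : x * (1 + ln x) <= 2 * (x * M).
  by rewrite mulrCA ler_wpM2l ?ler0n //; lra.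
have t2 : (k.*2.+1)%:R * (1 + ln (k.+1)%:R) <= 9 * (x * M).
  rewrite (_ : 9 * (x * M) = (3 * x) * (3 * M)); last by ring.
  apply: ler_pM; rewrite ?ler0n //; first lra.
    by rewrite /x -natrM ler_nat; lia.
  lra.
have t3 : 2 * x / g * ln (maxn k 2)%:R <= 2 * x / g * M.
  by rewrite ler_wpM2l // divr_ge0 ?mulr_ge0 ?ler0n ?ltW.
have -> : (11 + 2 / g) * x * M = 11 * (x * M) + 2 * x / g * M by ring.
lra.
Qed.

End EigenvalueRatios.

Theorem lemma10p1 (R : realType) (gamma : R) (hgamma : 0 < gamma) :
  exists C : R, forall lam : nat -> R,
    eigen_seq lam ->
    decreasing_from1 (weighted gamma lam) ->
    forall k : nat, (1 <= k)%N ->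
      (\sum_(1 <= j <oo | j != k) (lam j / `|lam k - lam j|)%:E
        <= (C * k%:R * Num.max (ln k%:R) 1)%:E)%E.
Proof.
exists (11 + 2 / gamma) => lam lam_eigen lam_weighted k k1.
have ratio_ge0 j : (1 <= j)%N -> j != k -> (0 <= (lam j / `|lam k - lam j|)%:E)%E.
  by case: lam_eigen => lam_ge0 _ j1 _; rewrite lee_fin divr_ge0 ?lam_ge0.
apply: lime_le (is_cvg_nneseries ratio_ge0) _.
near=> n; rewrite sumEFin lee_fin sum_ratio_le //.
near: n; exact: nbhs_infty_ge.
Unshelve. all: by end_near.
Qed.
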